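(* Let $\phi:\Delta\to\mathbb R$ be continuous, and for each $n$ and each pair of partitions $\lambda,\mu\vdash n$ let $\phi^{(\lambda)}_n(\mu)\in\mathbb R$ be given, such that there is a sequence $\delta_n\to0$ (not depending on $\lambda,\mu$) with $|\phi^{(\lambda)}_n(\mu)-\phi(\mu/n)|\le\delta_n$ for all $n,\lambda,\mu$. Let $g(x)=\max_{y\in\Delta,\,y\trianglerighteq x}\phi(y)$. Then for any $y\in\mathbb R^\theta$, as $n\to\infty$, \[ \frac1n\log\Big(\sum_{\lambda\vdash n}e^{y\cdot\lambda}\sum_{\mu\vdash n,\ \mu\trianglerighteq\lambda}\exp\big(n\,\phi^{(\lambda)}_n(\mu)\big)\Big)\to\max_{x\in\Delta}\big(y\cdot x+g(x)\big). \]
   Context: Fix $\theta\in\{2,3,\dots\}$. A partition $\lambda\vdash n$ means a vector $(\lambda_1,\dots,\lambda_\theta)$ of nonnegative integers with $\lambda_1\ge\dots\ge\lambda_\theta$ and $\sum\lambda_i=n$. $\Delta=\{x\in[0,1]^\theta:x_1\ge\dots\ge x_\theta,\ \sum_i x_i=1\}$. For vectors $x,y$, $y\trianglerighteq x$ means $y_1+\dots+y_i\ge x_1+\dots+x_i$ for all $i$. $y\cdot x=\sum_i y_ix_i$. *)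

From HB Require Import structures.
From mathcomp Require Import all_boot all_order all_algebra.
From mathcomp Require Import all_classical all_reals all_analysis.
Set Implicit Arguments. Unset Strict Implicit. Unset Printing Implicit Defensive.
Import Order.TTheory GRing.Theory Num.Theory.
Import numFieldNormedType.Exports.
Local Open Scope ring_scope.
Local Open Scope classical_set_scope.

Definition is_partition (theta n : nat) (l : 'I_theta -> nat) : bool :=
  [forall i : 'I_theta, forall j : 'I_theta, (i <= j)%N ==> (l j <= l i)%N]
  && (\sum_(i < theta) l i == n)%N.

Definition Delta {R : realType} (theta : nat) : set 'rV[R]_theta :=
  [set x | (forall i, 0 <= x 0 i <= 1)
         /\ (forall i j : 'I_theta, (i <= j)%N -> x 0 j <= x 0 i)
         /\ \sum_(i < theta) x 0 i = 1].

Definition dominates {R : realType} (theta : nat) (y x : 'rV[R]_theta) : Prop :=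
  forall k : nat, \sum_(i < theta | (i < k)%N) x 0 i <= \sum_(i < theta | (i < k)%N) y 0 i.

Definition dotp {R : realType} (theta : nat) (y x : 'rV[R]_theta) : R :=
  \sum_(i < theta) y 0 i * x 0 i.

Definition natv {R : realType} (theta : nat) (l : 'I_theta -> nat) : 'rV[R]_theta :=
  \row_i (l i)%:R.
Definition scaledv {R : realType} (theta n : nat) (l : 'I_theta -> nat) : 'rV[R]_theta :=
  \row_i ((l i)%:R / n%:R).

(* g(x) = max_{y in Delta, y ⊵ x} phi(y), written as a supremum (the max is attained). *)
Definition gmax {R : realType} (theta : nat) (phi : 'rV[R]_theta -> R)
  (x : 'rV[R]_theta) : R :=
  sup [set phi z | z in [set z | Delta z /\ dominates z x]].

(* max_{x in Delta} (y.x + g(x)), written as a supremum (the max is attained). *)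
Definition limval {R : realType} (theta : nat) (phi : 'rV[R]_theta -> R)
  (y : 'rV[R]_theta) : R :=
  sup [set dotp y x + gmax phi x | x in (@Delta R theta)].

Definition Zsum {R : realType} (theta : nat)
  (phin : nat -> ('I_theta -> nat) -> ('I_theta -> nat) -> R)
  (y : 'rV[R]_theta) (n : nat) : R :=
  \sum_(l : {ffun 'I_theta -> 'I_n.+1} | is_partition n (fun i => nat_of_ord (l i)))
     expR (dotp y (natv (fun i => nat_of_ord (l i))))
     * \sum_(m : {ffun 'I_theta -> 'I_n.+1} |
               is_partition n (fun i => nat_of_ord (m i))
               && `[< dominates (natv (R:=R) (fun i => nat_of_ord (m i)))
                               (natv (fun i => nat_of_ord (l i))) >])
         expR (n%:R * phin n (fun i => nat_of_ord (l i)) (fun i => nat_of_ord (m i))).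

From HB Require Import structures.
From mathcomp Require Import all_boot all_order all_algebra.
From mathcomp Require Import all_classical all_reals all_analysis.
From mathcomp Require Import ring lra.
Import Order.TTheory GRing.Theory Num.Theory.
Import numFieldNormedType.Exports.
Local Open Scope ring_scope.
Local Open Scope classical_set_scope.

(* Upper bound: the double sum has at most [(n + 1) ^ (2 theta)] terms, and as [mu / n]
   dominates [lambda / n], each exponent [y.lambda + n phi_n(lambda, mu)] is at most
   [n (y.(lambda / n) + g(lambda / n) + delta_n) <= n (L + delta_n)]; counting the terms
   costs only [O(log n)].
   Lower bound: take [x], [z] in the simplex with [z] dominating [x] and [y.x + phi z]
   close to [L].  Moving [x] slightly towards the barycentre and [z] towards the first
   unit vector makes every proper prefix inequality strict by a fixed margin, so rounding
   both points to partitions of [n] preserves dominance for large [n]; the single term of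
   that pair gives the bound by continuity of [phi]. *)

Set Implicit Arguments. Unset Strict Implicit. Unset Printing Implicit Defensive.

Lemma sum_rowE (V : nmodType) k (P : pred 'I_k) (F : 'I_k -> V) :
  \sum_(i < k | P i) (\row_j F j) 0 i = \sum_(i < k | P i) F i.
Proof. by apply: eq_bigr => i _; rewrite mxE. Qed.

Lemma sumr_prefix_if0 (V : nmodType) k p (c : V) : (0 < k)%N ->
  \sum_(i < k | (i < p)%N) (if i == 0 :> nat then c else 0) = if (0 < p)%N then c else 0.
Proof.
move=> k0; case: (posnP p) => [->|p0]; first by rewrite big1 // => i; rewrite ltn0.
rewrite (bigD1 (Ordinal k0)) //= big1 ?addr0 // => i /andP[_ /negbTE].
by case: ifP => // /eqP i0; rewrite (_ : i = Ordinal k0) ?eqxx //; apply: val_inj.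
Qed.

Lemma sumr_if0 (V : nmodType) k (c : V) : (0 < k)%N ->
  \sum_(i < k) (if i == 0 :> nat then c else 0) = c.
Proof.
move=> k0; transitivity (\sum_(i < k | (i < k)%N) (if i == 0 :> nat then c else 0)).
  by apply: eq_bigl => i; rewrite ltn_ord.
by rewrite sumr_prefix_if0 // k0.
Qed.

Lemma sumr_prefix_const (V : nmodType) k p (c : V) : (p <= k)%N ->
  \sum_(i < k | (i < p)%N) c = c *+ p.
Proof.
by move=> pk; rewrite -(big_ord_widen k (fun=> c) pk) sumr_const card_ord.
Qed.

Lemma closed_ge0 (T : topologicalType) (R : realType) (f : T -> R) :
  continuous f -> closed [set x | 0 <= f x].
Proof.
move=> fc; rewrite (_ : [set x | 0 <= f x] = f @^-1` [set r | 0 <= r]) //.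
by apply: preimage_closed; [move=> x _; exact: fc | exact: closed_ge].
Qed.

Lemma ln_succ_lt_linear (R : realType) (c : R) : 0 < c ->
  \forall n \near \oo, ln (n.+1%:R : R) < c * n%:R.
Proof.
move=> c0; exists (Num.truncn (2 / (c * c))).+1 => // n /= Nn.
have cc0 : 0 < c * c by rewrite mulr_gt0.
have : 2 / (c * c) < n%:R.
  by apply: lt_le_trans (real_truncnS_gt _) _; rewrite ?num_real // ler_nat.
rewrite ltr_pdivrMr // mulrC => n_big.
have cn0 : 0 <= c * n%:R by rewrite mulr_ge0 // ltW.
rewrite -[X in _ < X]expRK ltr_ln ?posrE ?ltr0Sn ?expR_gt0 //.
(* [expR t >= 1 + t ^ 2 / 2] at [t = c n] already exceeds [n + 1]. *)
apply: lt_le_trans (expR_ge1Dxn 1 cn0); rewrite expr2 /= -natr1 addrC ltrD2l.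
rewrite (_ : _ / _ = c * c * n%:R * n%:R / 2); last by ring.
have n1 : (1 : R) <= n%:R by rewrite ler1n (leq_trans _ Nn).
by rewrite ltr_pdivlMr //; nra.
Qed.

Section Simplex.
Variables (R : realType) (theta : nat).
Implicit Types (l m : 'I_theta -> nat) (a b x y z w : 'rV[R]_theta).

Lemma partition_le n l i : is_partition n l -> (l i <= n)%N.
Proof. by case/andP=> _ /eqP <-; rewrite (bigD1 i) //= leq_addr. Qed.

Lemma scaledv_Delta n l : (0 < n)%N -> is_partition n l -> @Delta R theta (scaledv n l).
Proof.
move=> n0 lp; have n0' : (0 : R) < n%:R by rewrite ltr0n.
have [/forallP lmono /eqP lsum] := andP lp.
split; [|split].
- move=> i; rewrite mxE divr_ge0 //= ler_pdivrMr // mul1r ler_nat.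
  exact: partition_le.
- move=> i j ij; rewrite !mxE ler_pM2r ?invr_gt0 // ler_nat.
  by have /forallP/(_ j) := lmono i; rewrite ij.
- by rewrite sum_rowE -mulr_suml -natr_sum lsum divff // gt_eqF.
Qed.

Lemma dominates_refl x : dominates x x.
Proof. by []. Qed.

Lemma dominates_scaledv n l m : (0 < n)%N ->
  dominates (natv m : 'rV[R]_theta) (natv l) ->
  dominates (scaledv n m : 'rV[R]_theta) (scaledv n l).
Proof.
move=> n0 dom k; have := dom k; rewrite !sum_rowE -!mulr_suml => h.
by rewrite ler_pM2r // invr_gt0 ltr0n.
Qed.

Lemma dotp_natv n y l : (0 < n)%N -> dotp y (natv l) = n%:R * dotp y (scaledv n l).
Proof.
move=> n0; rewrite /dotp mulr_sumr; apply: eq_bigr => i _; rewrite !mxE.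
by field; rewrite pnatr_eq0 -lt0n.
Qed.

Lemma closed_Delta : closed (@Delta R theta).
Proof.
have coord_cont i : continuous (fun x : 'rV[R]_theta => x 0 i) by exact: coord_continuous.
have sum_cont : continuous (fun x : 'rV[R]_theta => \sum_(i < theta) x 0 i).
  by apply: continuous_big => [|i _]; [exact: add_continuous | exact: coord_cont].
rewrite (_ : @Delta R theta = (\bigcap_(i in setT) [set x : 'rV[R]_theta | 0 <= x 0 i])
   `&` (\bigcap_(i in setT) [set x | 0 <= 1 - x 0 i])
   `&` (\bigcap_(p in [set p : 'I_theta * 'I_theta | (p.1 <= p.2)%N])
          [set x | 0 <= x 0 p.1 - x 0 p.2])
   `&` ((fun x => \sum_(i < theta) x 0 i) @^-1` [set 1])); last first.
  apply/seteqP; split => x /=.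
  - move=> [H1 [H2 H3]]; split; [split; [split|]|] => //.
    + by move=> i _; case/andP: (H1 i).
    + by move=> i _ /=; rewrite subr_ge0; case/andP: (H1 i).
    + by move=> [i j] /= ij; rewrite subr_ge0; exact: H2.
  - move=> [[[H1 H2] H3] H4]; split; [|split] => //.
    + by move=> i; rewrite (H1 i I) -subr_ge0 (H2 i I).
    + by move=> i j ij; have := H3 (i, j) ij; rewrite /= subr_ge0.
apply: closedI; last first.
  by apply: preimage_closed; [move=> x _; exact: sum_cont | exact: closed_eq].
apply: closedI; [apply: closedI|]; apply: closed_bigI => i _; apply: closed_ge0.
- exact: coord_cont.
- by move=> x; apply: continuousB; [exact: cst_continuous | exact: coord_cont].
- by move=> x; apply: continuousB; exact: coord_cont.
Qed.

Lemma compact_Delta : compact (@Delta R theta).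
Proof.
apply: bounded_closed_compact closed_Delta; exists 1; split; first by rewrite num_real.
move=> M M1 x [H1 _]; rewrite /Num.norm /= mx_normrE.
apply: bigmax_le => [|[i j] _ /=]; first by rewrite (le_trans ler01) // ltW.
rewrite (ord1 i); have /andP[h0 h1] := H1 j.
by rewrite ger0_norm // (le_trans h1) // ltW.
Qed.

Definition e1row : 'rV[R]_theta := \row_i (if i == 0 :> nat then 1 else 0).

Lemma e1row_Delta : (0 < theta)%N -> @Delta R theta e1row.
Proof.
move=> th0; split; [|split].
- by move=> i; rewrite mxE; case: ifP => _; rewrite lexx ler01.
- move=> i j ij; rewrite !mxE; case: ifP => j0; case: ifP => i0 //.
  by move/eqP: j0 ij => ->; rewrite leqn0 i0.
- by rewrite sum_rowE sumr_if0.
Qed.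

Lemma bounded_on_Delta (phi : 'rV[R]_theta -> R) :
  (0 < theta)%N -> {within @Delta R theta, continuous phi} ->
  exists M, forall z, Delta z -> phi z <= M.
Proof.
move=> th0 pc; have [c _ phi_max] :=
  EVT_max_rV (ex_intro _ _ (e1row_Delta th0)) compact_Delta pc.
by exists (phi c) => z Dz; apply: phi_max; rewrite inE.
Qed.

Lemma continuous_within_Delta_coord (phi : 'rV[R]_theta -> R) z (e : R) :
  {within @Delta R theta, continuous phi} -> Delta z -> 0 < e ->
  exists2 d, 0 < d & forall w, Delta w -> (forall i, `|z 0 i - w 0 i| < d) ->
     `|phi z - phi w| < e.
Proof.
move=> pc Dz e0; have /subspace_continuousP/(_ z Dz) := pc.
move/cvgrPdist_lt/(_ e e0)/nbhs_ballP => [d d0 Hd].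
exists d => // w Dw Hw; apply: Hd => //; rewrite -ball_normE /= /Num.norm /= mx_normrE.
by apply: bigmax_lt => // -[i j] _ /=; rewrite (ord1 i) !mxE; exact: Hw.
Qed.

Definition norm1 y : R := \sum_(i < theta) `|y 0 i|.

Lemma norm1_ge0 y : 0 <= norm1 y.
Proof. exact: sumr_ge0. Qed.

Lemma dotp_dist y a b (d : R) :
  (forall i, `|a 0 i - b 0 i| <= d) -> `|dotp y a - dotp y b| <= norm1 y * d.
Proof.
move=> H; rewrite /dotp -sumrB /norm1 mulr_suml.
apply: le_trans (ler_norm_sum _ _ _) _; apply: ler_sum => i _.
by rewrite -mulrBr normrM ler_wpM2l.
Qed.

Lemma dotp_le_norm1 y x : Delta x -> dotp y x <= norm1 y.
Proof.
move=> [H1 _]; apply: ler_sum => i _; have /andP[h0 h1] := H1 i.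
apply: le_trans (ler_norm _) _; rewrite normrM (ger0_norm h0).
by rewrite -[leRHS]mulr1 ler_wpM2l.
Qed.

End Simplex.

Section Supremum.
Variables (R : realType) (theta : nat) (phi : 'rV[R]_theta -> R).
Implicit Types (x y z : 'rV[R]_theta).

Section Bounded.
Variable M : R.
Hypothesis phi_le : forall z, Delta z -> phi z <= M.

Lemma phi_le_gmax x z : Delta z -> dominates z x -> phi z <= gmax phi x.
Proof.
move=> Dz dzx; apply: ub_le_sup; last by exists z.
by exists M => _ [w [Dw _] <-]; exact: phi_le.
Qed.

Lemma gmax_le x : Delta x -> gmax phi x <= M.
Proof.
move=> Dx; apply: ge_sup; first by exists (phi x), x; split => //; exact: dominates_refl.
by move=> _ [w [Dw _] <-]; exact: phi_le.
Qed.

Lemma limval_ge y x : Delta x -> dotp y x + gmax phi x <= limval phi y.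
Proof.
move=> Dx; apply: ub_le_sup; last by exists x.
exists (norm1 y + M) => _ [w Dw <-].
by apply: lerD; [exact: dotp_le_norm1 | exact: gmax_le].
Qed.

End Bounded.

Lemma lt_limval y v : (0 < theta)%N -> v < limval phi y ->
  exists x z, [/\ Delta x, Delta z, dominates z x & v < dotp y x + phi z].
Proof.
move=> th0 /sup_gt [].
  by exists (dotp y (e1row R theta) + gmax phi (e1row R theta)), (e1row R theta);
    first exact: e1row_Delta.
move=> _ [x Dx <-]; rewrite -ltrBlDl => /sup_gt [].
  by exists (phi x), x; split => //; exact: dominates_refl.
by move=> _ [z [Dz dzx] <-] h; exists x, z; split => //; rewrite -ltrBlDl.
Qed.

End Supremum.

Section Rounding.
Variables (R : realType) (theta : nat) (w : 'rV[R]_theta).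
Hypotheses (theta_gt0 : (0 < theta)%N) (Dw : Delta w).

Definition floor_scaled n i : nat := Num.truncn (n%:R * w 0 i).

(* Giving the whole rounding deficit to the first part keeps the parts nonincreasing. *)
Definition round_partition n i : nat :=
  (floor_scaled n i + (if i == 0 :> nat then n - \sum_j floor_scaled n j else 0))%N.

Lemma floor_scaled_bounds n i :
  (floor_scaled n i)%:R <= n%:R * w 0 i < (floor_scaled n i)%:R + 1.
Proof.
have [H1 _] := Dw; have /andP[h0 _] := H1 i.
by rewrite natr1; apply: truncn_itv; rewrite mulr_ge0.
Qed.

Lemma sum_floor_scaled_le n : (\sum_j floor_scaled n j <= n)%N.
Proof.
have [_ [_ wsum]] := Dw; rewrite -(ler_nat R) natr_sum.
apply: (@le_trans _ _ (n%:R * \sum_i w 0 i)); last by rewrite wsum mulr1.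
rewrite mulr_sumr; apply: ler_sum => i _.
by case/andP: (floor_scaled_bounds n i).
Qed.

Lemma round_partitionE n i : ((round_partition n i)%:R : R) =
  (floor_scaled n i)%:R + (if i == 0 :> nat then n%:R - \sum_j (floor_scaled n j)%:R else 0).
Proof.
rewrite /round_partition natrD; case: ifP => _ //.
by rewrite natrB ?sum_floor_scaled_le // natr_sum.
Qed.

Lemma deficit_bounds n : 0 <= n%:R - \sum_j ((floor_scaled n j)%:R : R) <= theta%:R.
Proof.
have [_ [_ wsum]] := Dw; apply/andP; split.
  by rewrite subr_ge0 -natr_sum ler_nat sum_floor_scaled_le.
apply: (@le_trans _ _ (\sum_(i < theta) (1 : R))); last by rewrite sumr_const card_ord.
have -> : n%:R = n%:R * \sum_i w 0 i :> R by rewrite wsum mulr1.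
rewrite mulr_sumr -sumrB; apply: ler_sum => i _; case/andP: (floor_scaled_bounds n i) => _ h.
by rewrite lerBlDl ltW.
Qed.

Lemma round_partition_is_partition n : is_partition n (round_partition n).
Proof.
have [_ [wmono _]] := Dw; apply/andP; split.
  apply/forallP => i; apply/forallP => j; apply/implyP => ij.
  have floor_le : (floor_scaled n j <= floor_scaled n i)%N.
    by apply: le_truncn; rewrite ler_wpM2l // wmono.
  rewrite /round_partition; case: ifP => j0.
    by move/eqP: j0 ij => ->; rewrite leqn0 => ->; rewrite leq_add2r.
  by rewrite addn0 (leq_trans floor_le) // leq_addr.
by rewrite /round_partition big_split /= (@sumr_if0 nat) // subnKC // sum_floor_scaled_le.
Qed.

Lemma round_partition_prefix n k :
  n%:R * (\sum_(i < theta | (i < k)%N) w 0 i)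
    <= \sum_(i < theta | (i < k)%N) ((round_partition n i)%:R : R)
    <= n%:R * (\sum_(i < theta | (i < k)%N) w 0 i) + theta%:R.
Proof.
case: (posnP k) => [->|k0].
  by rewrite !big1 ?mulr0 ?add0r ?lexx ?ler0n // => i; rewrite ltn0.
rewrite (eq_bigr _ (fun i _ => round_partitionE n i)) big_split /= sumr_prefix_if0 // k0.
have [_ [_ wsum]] := Dw.
have floor_le (P : pred 'I_theta) :
    \sum_(j < theta | P j) ((floor_scaled n j)%:R : R) <= n%:R * \sum_(j < theta | P j) w 0 j.
  by rewrite mulr_sumr; apply: ler_sum => i _; case/andP: (floor_scaled_bounds n i).
have /andP[_ deficit] := deficit_bounds n.
have Lk := floor_le (fun j : 'I_theta => (j < k)%N).
have Ln := floor_le (fun j : 'I_theta => ~~ (j < k)%N).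
have fsplit : \sum_(j < theta) ((floor_scaled n j)%:R : R) =
    \sum_(j < theta | (j < k)%N) (floor_scaled n j)%:R
    + \sum_(j < theta | ~~ (j < k)%N) (floor_scaled n j)%:R.
  by rewrite (bigID (fun j : 'I_theta => (j < k)%N)).
rewrite fsplit in deficit *.
have nsplit : n%:R * (\sum_(j < theta | (j < k)%N) w 0 j)
     + n%:R * (\sum_(j < theta | ~~ (j < k)%N) w 0 j) = n%:R.
  have wsplit : \sum_(i < theta) w 0 i = \sum_(j < theta | (j < k)%N) w 0 j
      + \sum_(j < theta | ~~ (j < k)%N) w 0 j by rewrite (bigID (fun j : 'I_theta => (j < k)%N)).
  by rewrite -mulrDr -wsplit wsum mulr1.
apply/andP; split; lra.
Qed.

Lemma round_partition_full n k : (theta <= k)%N ->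
  \sum_(i < theta | (i < k)%N) ((round_partition n i)%:R : R) = n%:R.
Proof.
move=> tk; have /andP[_ /eqP rsum] := round_partition_is_partition n.
transitivity ((\sum_i round_partition n i)%:R : R); last by rewrite rsum.
rewrite natr_sum; apply: eq_bigl => i; exact: leq_trans (ltn_ord i) tk.
Qed.

Lemma scaledv_round_partition_close n i : (0 < n)%N ->
  `|(scaledv n (round_partition n) : 'rV[R]_theta) 0 i - w 0 i| <= theta%:R / n%:R.
Proof.
move=> n0; have np : (0 : R) < n%:R by rewrite ltr0n.
rewrite mxE (_ : _ - _ = ((round_partition n i)%:R - n%:R * w 0 i) / n%:R); last first.
  by field; rewrite gt_eqF.
rewrite normrM normfV (gtr0_norm np) ler_pM2r ?invr_gt0 // round_partitionE.
have /andP[c0 c1] := deficit_bounds n.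
have /andP[t0 t1] := floor_scaled_bounds n i.
have th1 : (1 : R) <= theta%:R by rewrite ler1n.
rewrite ler_norml; case: ifP => _; apply/andP; split; lra.
Qed.

End Rounding.

Section Perturbation.
Variables (R : realType) (theta : nat) (eps : R).
Hypotheses (theta_gt0 : (0 < theta)%N) (eps01 : 0 <= eps <= 1).
Implicit Types x z : 'rV[R]_theta.

Definition toward_uniform x : 'rV[R]_theta := \row_i ((1 - eps) * x 0 i + eps / theta%:R).

Definition toward_e1 z : 'rV[R]_theta :=
  \row_i ((1 - eps) * z 0 i + (if i == 0 :> nat then eps else 0)).

Let thetaR_gt0 : (0 : R) < theta%:R. Proof. by rewrite ltr0n. Qed.

Let shrink_bounds (a : R) : 0 <= a <= 1 -> 0 <= (1 - eps) * a <= 1 - eps.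
Proof.
case/andP: eps01 => _ e1 /andP[a0 a1].
by rewrite mulr_ge0 ?subr_ge0 //= ler_piMr // subr_ge0.
Qed.

Lemma toward_uniform_Delta x : Delta x -> Delta (toward_uniform x).
Proof.
move=> [H1 [H2 H3]]; have /andP[e0 e1] := eps01.
have q0 : 0 <= eps / theta%:R by rewrite divr_ge0 // ltW.
have q1 : eps / theta%:R <= eps by rewrite ler_pdivrMr // ler_peMr // ler1n.
split; [|split].
- by move=> i; rewrite mxE; have /andP[] := shrink_bounds (H1 i); lra.
- by move=> i j ij; rewrite !mxE lerD2r ler_wpM2l ?subr_ge0 // H2.
- rewrite sum_rowE big_split /= -mulr_sumr H3 sumr_const card_ord.
  by rewrite -[_ *+ theta]mulr_natr mulfVK ?gt_eqF //; lra.
Qed.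

Lemma toward_e1_Delta z : Delta z -> Delta (toward_e1 z).
Proof.
move=> [H1 [H2 H3]]; have /andP[e0 e1] := eps01.
split; [|split].
- by move=> i; rewrite mxE; have /andP[] := shrink_bounds (H1 i); case: ifP; lra.
- move=> i j ij; rewrite !mxE.
  have : (1 - eps) * z 0 j <= (1 - eps) * z 0 i by rewrite ler_wpM2l ?subr_ge0 // H2.
  case: ifP => j0; case: ifP => i0; try lra.
  by move/eqP: j0 ij => ->; rewrite leqn0 i0.
- by rewrite sum_rowE big_split /= -mulr_sumr H3 (@sumr_if0 R^o) //; lra.
Qed.

Lemma toward_uniform_close x i : Delta x -> `|toward_uniform x 0 i - x 0 i| <= eps.
Proof.
move=> [H1 _]; have /andP[a0 a1] := H1 i; have /andP[e0 _] := eps01.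
have q0 : 0 <= theta%:R^-1 :> R by rewrite invr_ge0 ltW.
have q1 : theta%:R^-1 <= 1 :> R by rewrite invf_le1 // ler1n.
rewrite mxE (_ : _ - _ = eps * (theta%:R^-1 - x 0 i)); last by ring.
rewrite normrM ger0_norm // -[leRHS]mulr1 ler_wpM2l // ler_norml.
apply/andP; split; lra.
Qed.

Lemma toward_e1_close z i : Delta z -> `|toward_e1 z 0 i - z 0 i| <= eps.
Proof.
move=> [H1 _]; have /andP[a0 a1] := H1 i; have /andP[e0 _] := eps01.
rewrite mxE (_ : _ - _ = eps * ((if i == 0 :> nat then 1 else 0) - z 0 i)); last first.
  by case: ifP => _; ring.
rewrite normrM ger0_norm // -[leRHS]mulr1 ler_wpM2l // ler_norml.
by case: ifP => _; apply/andP; split; lra.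
Qed.

Lemma toward_prefix_margin x z k : (0 < k)%N -> (k < theta)%N ->
  \sum_(i < theta | (i < k)%N) x 0 i <= \sum_(i < theta | (i < k)%N) z 0 i ->
  \sum_(i < theta | (i < k)%N) toward_uniform x 0 i + eps / theta%:R <=
  \sum_(i < theta | (i < k)%N) toward_e1 z 0 i.
Proof.
move=> k0 kt dzx; have /andP[e0 e1] := eps01.
rewrite !sum_rowE !big_split /= -!mulr_sumr sumr_prefix_const ?(ltnW kt) //.
rewrite sumr_prefix_if0 // k0 -mulr_natr.
have : eps / theta%:R * k%:R + eps / theta%:R <= eps.
  have : eps / theta%:R * k.+1%:R <= eps / theta%:R * theta%:R.
    by rewrite ler_wpM2l ?ler_nat // divr_ge0 // ltW.
  by rewrite mulfVK ?gt_eqF // -natr1 mulrDr mulr1.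
have : (1 - eps) * \sum_(i < theta | (i < k)%N) x 0 i
    <= (1 - eps) * \sum_(i < theta | (i < k)%N) z 0 i by rewrite ler_wpM2l ?subr_ge0.
lra.
Qed.

End Perturbation.

Section DominatingPartitions.
Variables (R : realType) (theta : nat).
Hypothesis theta_gt0 : (0 < theta)%N.
Implicit Types x z : 'rV[R]_theta.

(* The rounding error [theta] of each prefix sum is absorbed by the margin [n eps / theta]. *)
Lemma round_toward_dominates x z (eps : R) n :
  Delta x -> Delta z -> dominates z x -> 0 < eps <= 1 ->
  theta%:R * theta%:R <= n%:R * eps ->
  dominates (natv (round_partition (toward_e1 eps z) n) : 'rV[R]_theta)
            (natv (round_partition (toward_uniform eps x) n)).
Proof.
move=> Dx Dz dzx /andP[e0 e1] big k; rewrite !sum_rowE.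
have e01 : 0 <= eps <= 1 by rewrite e1 ltW.
have Dx' := toward_uniform_Delta theta_gt0 e01 Dx.
have Dz' := toward_e1_Delta theta_gt0 e01 Dz.
case: (posnP k) => [->|k0]; first by rewrite !big1.
case: (ltnP k theta) => kt; last first.
  by rewrite (round_partition_full theta_gt0 Dx') // (round_partition_full theta_gt0 Dz').
have /andP[_ upper] := round_partition_prefix theta_gt0 Dx' n k.
have /andP[lower _] := round_partition_prefix theta_gt0 Dz' n k.
have := ler_wpM2l (ler0n R n) (toward_prefix_margin theta_gt0 e01 k0 kt (dzx k)).
have : theta%:R <= n%:R * (eps / theta%:R).
  by rewrite mulrA ler_pdivlMr ?ltr0n.
rewrite mulrDr; lra.
Qed.

Lemma dominating_partitions_near x z (eps : R) n : (0 < n)%N ->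
  Delta x -> Delta z -> dominates z x -> 0 < eps <= 1 ->
  theta%:R * theta%:R <= n%:R * eps ->
  exists l m : 'I_theta -> nat,
    [/\ is_partition n l, is_partition n m, dominates (natv m : 'rV[R]_theta) (natv l),
        forall i, `|(scaledv n l : 'rV[R]_theta) 0 i - x 0 i| <= eps + eps
      & forall i, `|(scaledv n m : 'rV[R]_theta) 0 i - z 0 i| <= eps + eps].
Proof.
move=> n0 Dx Dz dzx /[dup] /andP[e0 e1] e01' big.
have e01 : 0 <= eps <= 1 by rewrite e1 ltW.
have thn : theta%:R / n%:R <= eps.
  have th1 : (1 : R) <= theta%:R by rewrite ler1n.
  by rewrite ler_pdivrMr ?ltr0n //; nra.
have close w v (Dw : Delta w) (Dv : Delta v) : (forall i, `|v 0 i - w 0 i| <= eps) ->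
    forall i, `|(scaledv n (round_partition v n) : 'rV[R]_theta) 0 i - w 0 i| <= eps + eps.
  move=> vw i; have := scaledv_round_partition_close theta_gt0 Dv i n0.
  have := ler_normD ((scaledv n (round_partition v n) : 'rV[R]_theta) 0 i - v 0 i)
                    (v 0 i - w 0 i).
  have := vw i; rewrite addrA subrK; lra.
have Dx' := toward_uniform_Delta theta_gt0 e01 Dx.
have Dz' := toward_e1_Delta theta_gt0 e01 Dz.
exists (round_partition (toward_uniform eps x) n), (round_partition (toward_e1 eps z) n).
split; [exact: round_partition_is_partition | exact: round_partition_is_partition
       | exact: round_toward_dominates | |].
- by apply: close => // i; apply: toward_uniform_close.
- by apply: close => // i; apply: toward_e1_close.
Qed.

End DominatingPartitions.

Section Zsum.
Variables (R : realType) (theta : nat).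
Variables (phin : nat -> ('I_theta -> nat) -> ('I_theta -> nat) -> R) (y : 'rV[R]_theta).

Lemma Zsum_ge_term n (l m : 'I_theta -> nat) :
  is_partition n l -> is_partition n m -> dominates (natv m : 'rV[R]_theta) (natv l) ->
  expR (dotp y (natv l) + n%:R * phin n l m) <= Zsum phin y n.
Proof.
have as_ffun (k : 'I_theta -> nat) : is_partition n k ->
    exists K : {ffun 'I_theta -> 'I_n.+1}, (fun i => nat_of_ord (K i)) = k.
  move=> Pk; exists [ffun i => inord (k i)]; apply: funext => i.
  by rewrite ffunE inordK // ltnS (partition_le _ Pk).
move=> Pl Pm; have [L eL] := as_ffun l Pl; have [M eM] := as_ffun m Pm.
subst l m => dom; rewrite /Zsum (bigD1 L) //= ler_wpDr //.
  apply: sumr_ge0 => L' _; rewrite mulr_ge0 ?expR_ge0 //.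
  by apply: sumr_ge0 => M' _; exact: expR_ge0.
rewrite expRD ler_wpM2l ?expR_ge0 // (bigD1 M) /=; last by rewrite Pm; apply/asboolP.
by rewrite ler_wpDr //; apply: sumr_ge0 => i _; exact: expR_ge0.
Qed.

Lemma Zsum_gt0 n : (0 < theta)%N -> 0 < Zsum phin y n.
Proof.
move=> th0; have P := round_partition_is_partition th0 (@e1row_Delta R theta th0) n.
exact: lt_le_trans (expR_gt0 _) (Zsum_ge_term P P (dominates_refl _)).
Qed.

Lemma Zsum_le n (B : R) :
  (forall l m : 'I_theta -> nat, is_partition n l -> is_partition n m ->
     dominates (natv m : 'rV[R]_theta) (natv l) -> dotp y (natv l) + n%:R * phin n l m <= B) ->
  Zsum phin y n <= ((n.+1 ^ theta) ^ 2)%:R * expR B.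
Proof.
move=> term_le; rewrite /Zsum.
have card_ffun_ord : #|{ffun 'I_theta -> 'I_n.+1}| = (n.+1 ^ theta)%N.
  by rewrite card_ffun !card_ord.
apply: (@le_trans _ _ (\sum_(l : {ffun 'I_theta -> 'I_n.+1}) ((n.+1 ^ theta)%:R * expR B))).
  rewrite big_mkcond /=; apply: ler_sum => l _; case: ifP => Pl; last first.
    by rewrite mulr_ge0 ?ler0n ?expR_ge0.
  rewrite mulr_sumr.
  apply: (@le_trans _ _ (\sum_(m : {ffun 'I_theta -> 'I_n.+1}) expR B)); last first.
    by rewrite sumr_const card_ffun_ord mulr_natl.
  rewrite big_mkcond /=; apply: ler_sum => m _.
  case: ifP => [/andP[Pm /asboolP dom]|_]; last exact: expR_ge0.
  by rewrite -expRD ler_expR; apply: term_le.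
by rewrite sumr_const card_ffun_ord -mulrnAl -mulr_natr -natrM expnS expn1.
Qed.

End Zsum.

Section Limit.
Variables (R : realType) (theta : nat) (phi : 'rV[R]_theta -> R).
Variables (phin : nat -> ('I_theta -> nat) -> ('I_theta -> nat) -> R) (delta : nat -> R).
Variable y : 'rV[R]_theta.
Hypotheses (theta_gt0 : (0 < theta)%N) (phi_cont : {within @Delta R theta, continuous phi}).
Hypothesis delta_cvg : delta @ \oo --> 0.
Hypothesis phin_approx : forall n (l m : 'I_theta -> nat),
  is_partition n l -> is_partition n m -> `|phin n l m - phi (scaledv n m)| <= delta n.

Let L := limval phi y.

Lemma ln_Zsum_ge_term n l m :
  is_partition n l -> is_partition n m -> dominates (natv m : 'rV[R]_theta) (natv l) ->
  dotp y (natv l) + n%:R * phin n l m <= ln (Zsum phin y n).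
Proof.
by move=> Pl Pm dom; rewrite -ler_expR lnK ?posrE ?Zsum_gt0 ?Zsum_ge_term.
Qed.

Lemma ln_Zsum_le n : (0 < n)%N ->
  ln (Zsum phin y n) <= (theta * 2)%:R * ln n.+1%:R + n%:R * (L + delta n).
Proof.
move=> n0; have [M phi_le] := bounded_on_Delta theta_gt0 phi_cont.
have card_gt0 : (0 : R) < ((n.+1 ^ theta) ^ 2)%:R by rewrite ltr0n !expn_gt0.
rewrite -ler_expR lnK ?posrE ?Zsum_gt0 // expRD expRM_natl lnK ?posrE ?ltr0Sn //.
rewrite -natrX expnM; apply: Zsum_le => l m Pl Pm dom.
rewrite (dotp_natv _ _ n0) -mulrDr ler_wpM2l ?ler0n //.
have := phin_approx Pl Pm; rewrite ler_norml => /andP[_ phin_le].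
have Dl := scaledv_Delta R n0 Pl; have Dm := scaledv_Delta R n0 Pm.
have := phi_le_gmax phi_le Dm (dominates_scaledv n0 dom).
have := limval_ge phi_le y Dl; rewrite -/L; lra.
Qed.

Lemma ln_Zsum_rate_lt e : 0 < e ->
  \forall n \near \oo, n%:R^-1 * ln (Zsum phin y n) < L + e.
Proof.
move=> e0; have e4 : 0 < e / 4 by rewrite divr_gt0.
have /cvgrPdist_lt/(_ _ e4) delta_small := delta_cvg.
have th4 : (0 : R) < 4 * theta%:R by rewrite mulr_gt0 ?ltr0n.
have ln_small := ln_succ_lt_linear (divr_gt0 e0 th4).
near=> n.
have n0 : (0 < n)%N by near: n; exact: nbhs_infty_gt.
have np : (0 : R) < n%:R by rewrite ltr0n.
have : `|0 - delta n| < e / 4 by near: n.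
rewrite sub0r normrN ltr_norml => /andP[_ dn].
have ln_lin : (theta * 2)%:R * ln n.+1%:R < n%:R * (e / 2).
  have : ln n.+1%:R < e / (4 * theta%:R) * n%:R by near: n.
  rewrite -(ltr_pM2l (_ : (0 : R) < (theta * 2)%:R)) ?ltr0n ?muln_gt0 ?theta_gt0 //.
  by rewrite (_ : _ * (_ * _) = n%:R * (e / 2)) // natrM; field; rewrite pnatr_eq0 -lt0n.
have nd : n%:R * delta n <= n%:R * (e / 4) by rewrite ler_wpM2l ?ltW.
have ne : 0 <= n%:R * e by rewrite mulr_ge0 ?ltW.
have := ln_Zsum_le n0.
by rewrite -(ltr_pM2l np) mulrA mulfV ?gt_eqF // mul1r !mulrDr; lra.
Unshelve. all: end_near.
Qed.

Lemma ln_Zsum_rate_gt e : 0 < e ->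
  \forall n \near \oo, L - e < n%:R^-1 * ln (Zsum phin y n).
Proof.
move=> e0; have e4 : 0 < e / 4 by rewrite divr_gt0.
have e8 : 0 < e / 8 by rewrite divr_gt0.
have /(lt_limval theta_gt0) [x [z [Dx Dz dzx xz_near]]] : L - e / 2 < L.
  by rewrite ltrBlDr ltrDl divr_gt0.
have [d d0 phi_near] := continuous_within_Delta_coord phi_cont Dz e4.
have norm1y_ge0 := norm1_ge0 y.
pose eps := Num.min 1 (Num.min (d / 4) (e / (16 * (norm1 y + 1)))).
have eps01 : 0 < eps <= 1.
  by rewrite lt_min ltr01 lt_min !divr_gt0 ?mulr_gt0 ?ltr_wpDl //= ge_min lexx.
have eps_d : eps <= d / 4 by rewrite /eps !ge_min lexx orbT.
have eps_e : norm1 y * (eps + eps) <= e / 8.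
  have : eps * (16 * (norm1 y + 1)) <= e.
    by rewrite -ler_pdivlMr ?mulr_gt0 ?ltr_wpDl // /eps !ge_min lexx !orbT.
  have /andP[eps0 _] := eps01; nra.
have /cvgrPdist_lt/(_ _ e8) delta_small := delta_cvg.
near=> n.
have n0 : (0 < n)%N by near: n; exact: nbhs_infty_gt.
have np : (0 : R) < n%:R by rewrite ltr0n.
have big : theta%:R * theta%:R <= n%:R * eps.
  have /andP[eps0 _] := eps01; rewrite -ler_pdivrMr //; near: n; exact: nbhs_infty_ger.
have : `|0 - delta n| < e / 8 by near: n.
rewrite sub0r normrN ltr_norml => /andP[_ dn].
have [l [m [Pl Pm dom lx mz]]] := dominating_partitions_near theta_gt0 n0 Dx Dz dzx eps01 big.
have lnZ_ge := ln_Zsum_ge_term Pl Pm dom; rewrite (dotp_natv _ _ n0) -mulrDr in lnZ_ge.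
have := dotp_dist y lx; rewrite ler_norml => /andP[dot_near _].
have := phin_approx Pl Pm; rewrite ler_norml => /andP[phin_near _].
have /phi_near : forall i, `|z 0 i - (scaledv n m : 'rV[R]_theta) 0 i| < d.
  by move=> i; rewrite distrC; apply: le_lt_trans (mz i) _; lra.
move=> /(_ (scaledv_Delta R n0 Pm)); rewrite ltr_norml => /andP[_ phi_close].
have : L - e < dotp y (scaledv n l) + phin n l m by lra.
rewrite -(ltr_pM2l np) => lt_n.
by rewrite -(ltr_pM2l np) mulrA mulfV ?gt_eqF // mul1r (lt_le_trans lt_n).
Unshelve. all: end_near.
Qed.

End Limit.

Theorem lemma3p4 (R : realType) (theta : nat) (htheta : (2 <= theta)%N)
  (phi : 'rV[R]_theta -> R)
  (phicont : {within (@Delta R theta), continuous phi})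
  (phin : nat -> ('I_theta -> nat) -> ('I_theta -> nat) -> R)
  (happrox : exists delta : nat -> R,
      delta @ \oo --> 0 /\
      forall (n : nat) (l m : 'I_theta -> nat),
        is_partition n l -> is_partition n m ->
        `|phin n l m - phi (scaledv n m)| <= delta n)
  (y : 'rV[R]_theta) :
  (fun n : nat => (n%:R)^-1 * ln (Zsum phin y n)) @ \oo --> limval phi y.
Proof.
have theta_gt0 : (0 < theta)%N by apply: leq_trans htheta.
have [delta [delta_cvg phin_approx]] := happrox.
apply/cvgrPdist_lt => e e0; near=> n; rewrite /= ltr_distlC; apply/andP; split.
- by near: n; exact: (ln_Zsum_rate_gt y theta_gt0 phicont delta_cvg phin_approx e0).
- by near: n; exact: (ln_Zsum_rate_lt y theta_gt0 phicont delta_cvg phin_approx e0).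
Unshelve. all: end_near.
Qed.
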